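(* The $0$-Bruhat order on $\mathcal B_\infty$ is the order induced from the $0$-Bruhat order on $\mathcal S_{\pm\infty}$ via the inclusion $\mathcal B_\infty\hookrightarrow\mathcal S_{\pm\infty}$: for $u,w\in\mathcal B_\infty$, $u\le_0 w$ if and only if $u\trianglelefteq_0 w$.
   Context: Write $\bar i:=-i$. $\mathcal S_{\pm\infty}$ is the group of permutations of $\pm\mathbb N=\{\dots,\bar2,\bar1,1,2,\dots\}$ moving finitely many elements, with length $l(w)=\#\{(a,b):a<b,\ w(a)>w(b)\}$ (usual order on $\pm\mathbb N$). Its $0$-Bruhat order $\trianglelefteq_0$ is generated by covers $u\,\triangleleft\!\cdot_0\, w$ meaning $l(w)=l(u)+1$ and $w=u\,(a,b)$ for a transposition $(a,b)$ with $a<0<b$. $\mathcal B_n\subset\mathcal S_{\pm\infty}$ consists of permutations $w$ of $\pm[n]$ with $w(\bar a)=\overline{w(a)}$ (fixing everything else), $\mathcal B_\infty=\bigcup_n\mathcal B_n$, with length $\ell(w)=\#\{(i,j):0<i<j,w(i)>w(j)\}+\sum_{i>0,w(i)<0}|w(i)|$; its $0$-Bruhat order $\le_0$ is generated by covers $u\lessdot_0w$: $\ell(w)=\ell(u)+1$ and $u^{-1}w\in\{(\bar j,j),\ (\bar j,i)(\bar i,j):0<i<j\}$. *)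

From mathcomp Require Import all_boot all_order all_algebra.
Set Implicit Arguments. Unset Strict Implicit. Unset Printing Implicit Defensive.
Import Order.TTheory GRing.Theory Num.Theory.
Local Open Scope ring_scope.

(* Elements of S_{+-oo}: permutations of +-N = Z \ {0}, modelled as injective
   maps int -> int fixing 0 and every x with |x| > sbound (finite support).
   (Injective + fixing everything outside [-N,N] forces a bijection of int,
   which restricts to a bijection of Z \ {0} since 0 is fixed.) *)
Record sperm := SPerm {
  sfun :> int -> int;
  sbound : nat;
  sfun0 : sfun 0 = 0;
  sfun_inj : injective sfun;
  sfun_supp : forall x : int, (sbound < absz x)%N -> sfun x = x }.

Definition rng (N : nat) : seq int :=
  [seq x <- [seq (i%:Z - N%:Z) | i <- iota 0 (N.*2.+1)] | x != 0].
Definition posr (N : nat) : seq int := [seq i%:Z | i <- iota 1 N].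

(* number of inversions of w among pairs in rng N; independent of N once N
   bounds the support of w *)
Definition invS (w : int -> int) (N : nat) : nat :=
  count (fun p : int * int => (p.1 < p.2) && (w p.2 < w p.1))
        [seq (a, b) | a <- rng N, b <- rng N].

Definition lenS (w : sperm) : nat := invS w (sbound w).

Definition transp (a b : int) (x : int) : int :=
  if x == a then b else if x == b then a else x.

Definition coverS (u w : sperm) : Prop :=
  lenS w = (lenS u).+1 /\
  exists a b : int, a < 0 < b /\ forall x, w x = u (transp a b x).

Inductive leS0 : sperm -> sperm -> Prop :=
| leS0_refl u w : sfun u =1 sfun w -> leS0 u w
| leS0_step u v w : leS0 u v -> coverS v w -> leS0 u w.

Definition isB (w : sperm) : Prop := forall x : int, w (- x) = - w x.

Definition lenB (w : sperm) : nat :=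
  count (fun p : int * int => (p.1 < p.2) && (w p.2 < w p.1))
        [seq (i, j) | i <- posr (sbound w), j <- posr (sbound w)]
  + \sum_(i <- posr (sbound w) | w i < 0) absz (w i).

Definition coverB (u w : sperm) : Prop :=
  [/\ isB u, isB w, lenB w = (lenB u).+1 &
   (exists j : int, 0 < j /\ forall x, w x = u (transp (- j) j x)) \/
   (exists i j : int, 0 < i < j /\
      forall x, w x = u (transp (- j) i (transp (- i) j x)))].

Inductive leB0 : sperm -> sperm -> Prop :=
| leB0_refl u w : sfun u =1 sfun w -> leB0 u w
| leB0_step u v w : leB0 u v -> coverB v w -> leB0 u w.

(* A cover u <.0 u (a b) of S_{+-oo} raises the length by 1 + 2 k, where k counts
   the values of u strictly between u a and u b at positions between a and b.
   Hence u <|0 w forces the criterion [le0_crit]: u x <= w x for x < 0,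
   w x <= u x for x > 0, and w keeps every increasing pair of u on one side of 0
   increasing.

   For a signed permutation, 2 ell(u) = l(u) + #{i > 0 | u i < 0}.  With this
   identity, a type B cover by (-j j) is a single cover of S_{+-oo}, and one by
   (-j i)(-i j) is a chain of two such covers.

   Conversely, let signed u and w satisfy the criterion at positive positions.
   If u <> w, take b > 0 with w b < u b and u b least.  When u b > 0, the
   transposition (-b b) is a type B cover; when u b < 0, pairing b with the
   position e > 0 with w e < u e and u e > - u b least gives the cover
   (-e b)(-b e) (up to the order of b and e).  In both cases the criterion is
   preserved and sum_(c > 0) |u c - w c| drops, so induction on that sum
   builds a chain of type B covers from u to w. *)
From mathcomp Require Import all_boot all_order all_algebra.
From mathcomp Require Import zify.
Set Implicit Arguments. Unset Strict Implicit. Unset Printing Implicit Defensive.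
Import Order.TTheory GRing.Theory Num.Theory.
Local Open Scope ring_scope.

Definition fixed_outside (f : int -> int) (N : nat) :=
  forall x : int, (N < absz x)%N -> f x = x.

Lemma sperm_fixed_outside (u : sperm) N : (sbound u <= N)%N -> fixed_outside u N.
Proof. by move=> hN x hx; apply: sfun_supp; lia. Qed.

Lemma fixed_outside_comp (f g : int -> int) N :
  fixed_outside f N -> fixed_outside g N -> fixed_outside (f \o g) N.
Proof. by move=> hf hg x hx /=; rewrite hg // hf. Qed.

Lemma fixed_outside_bounded (u : sperm) N x :
  fixed_outside u N -> (absz x <= N)%N -> (absz (u x) <= N)%N.
Proof.
move=> hu hx; rewrite leqNgt; apply/negP => hux.
have /(@sfun_inj u) exu := hu _ hux.
by move: hux; rewrite exu ltnNge hx.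
Qed.

Lemma moved_bounded (u w : sperm) N x :
  fixed_outside u N -> fixed_outside w N -> w x != u x -> (absz x <= N)%N.
Proof. by move=> hu hw; apply: contraR; rewrite -ltnNge => hx; rewrite hu // hw. Qed.

Lemma sperm_eq0 (u : sperm) x : (u x == 0) = (x == 0).
Proof. by rewrite -{1}(sfun0 u) (inj_eq (@sfun_inj u)). Qed.

Definition seg (N : nat) : seq int := [seq i%:Z - N%:Z | i <- iota 0 N.*2.+1].

Lemma mem_seg N x : (x \in seg N) = (absz x <= N)%N.
Proof.
apply/mapP/idP => [[i]|hx]; first by rewrite mem_iota => hi ->; lia.
by exists (absz (x + N%:Z)); [rewrite mem_iota|]; lia.
Qed.

Lemma uniq_seg N : uniq (seg N).
Proof. by rewrite map_inj_uniq ?iota_uniq // => i j /=; lia. Qed.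

Lemma sperm_surj (u : sperm) y : exists x, u x = y.
Proof.
set N := sbound u; have hu := @sperm_fixed_outside u N (leqnn N).
have [hy|hy] := leqP (absz y) N; last by exists y; apply: hu.
have sub : {subset map u (seg N) <= seg N}.
  by move=> z /mapP [x]; rewrite !mem_seg => hx ->; apply: fixed_outside_bounded.
have un : uniq (map u (seg N)) by rewrite (map_inj_uniq (@sfun_inj u)) uniq_seg.
have [_ e] := uniq_min_size un sub (eq_leq (esym (size_map u (seg N)))).
have : y \in map u (seg N) by rewrite e mem_seg.
by case/mapP => x _ ->; exists x.
Qed.

Lemma mem_rng N x : (x \in rng N) = (x != 0) && (absz x <= N)%N.
Proof. by rewrite mem_filter -mem_seg. Qed.

Lemma uniq_rng N : uniq (rng N).
Proof. by rewrite filter_uniq // uniq_seg. Qed.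

Lemma mem_posr N x : (x \in posr N) = (0 < x) && (absz x <= N)%N.
Proof.
apply/mapP/idP => [[i]|hx]; first by rewrite mem_iota => hi ->; lia.
by exists (absz x); [rewrite mem_iota|]; lia.
Qed.

Lemma uniq_posr N : uniq (posr N).
Proof. by rewrite map_inj_uniq ?iota_uniq // => i j /=; lia. Qed.

Lemma transpL a b : transp a b a = b.
Proof. by rewrite /transp eqxx. Qed.

Lemma transpR a b : transp a b b = a.
Proof. by rewrite /transp eqxx; case: eqP. Qed.

Lemma transp_id a b x : x != a -> x != b -> transp a b x = x.
Proof. by rewrite /transp => /negbTE -> /negbTE ->. Qed.

Lemma transpK a b : involutive (transp a b).
Proof. by move=> x; rewrite /transp; repeat case: eqP => //=; move=> *; subst. Qed.

Lemma transp_inj a b : injective (transp a b).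
Proof. exact: inv_inj (transpK a b). Qed.

Lemma transp_fixed_outside a b N :
  (absz a <= N)%N -> (absz b <= N)%N -> fixed_outside (transp a b) N.
Proof. by move=> ha hb x hx; rewrite transp_id //; apply/eqP => exa; lia. Qed.

Lemma sperm_transp (u : sperm) a b : a != 0 -> b != 0 ->
  exists v : sperm, forall x, v x = u (transp a b x).
Proof.
move=> a0 b0; set N := maxn (sbound u) (maxn (absz a) (absz b)).
have v0 : u (transp a b 0) = 0 by rewrite transp_id ?sfun0 // eq_sym.
have vinj : injective (u \o transp a b) := inj_comp (@sfun_inj u) (@transp_inj a b).
have vsupp : fixed_outside (u \o transp a b) N.
  apply: fixed_outside_comp; first by apply: sperm_fixed_outside; lia.
  by apply: transp_fixed_outside; lia.
by exists (SPerm v0 vinj vsupp).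
Qed.

Lemma mul_transp_inv (u w : int -> int) a b :
  (forall x, w x = u (transp a b x)) -> forall x, u x = w (transp a b x).
Proof. by move=> hw x; rewrite hw transpK. Qed.

Lemma isB_comp (u v : sperm) (t : int -> int) : isB u -> (forall y, t (- y) = - t y) ->
  (forall x, v x = u (t x)) -> isB v.
Proof. by move=> uB t_odd hv y; rewrite !hv t_odd uB. Qed.

Lemma mul_pair_transpE (u : sperm) (v : int -> int) i j : isB u -> 0 < i < j ->
  (forall x, v x = u (transp (- j) i (transp (- i) j x))) ->
  [/\ v i = - u j, v j = - u i &
      forall x, x != i -> x != - i -> x != j -> x != - j -> v x = u x].
Proof.
move=> uB ij hv; split.
- by rewrite hv (@transp_id (- i)) ?transpR ?uB //; lia.
- by rewrite hv transpR transp_id ?uB //; lia.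
- by move=> x xi xmi xj xmj; rewrite hv !transp_id.
Qed.

(** * Inversions and the length of S_{+-oo} *)

Definition invpair (f : int -> int) (x y : int) : nat := (x < y) && (f y < f x).

Definition inv_on (f : int -> int) (s : seq int) : nat :=
  (\sum_(x <- s) \sum_(y <- s) invpair f x y)%N.

Lemma count_sum T (P : pred T) s : count P s = (\sum_(x <- s) P x)%N.
Proof. by rewrite -sum1_count big_mkcond. Qed.

Lemma count_allpairs (P : int -> int -> bool) s t :
  count (fun p : int * int => P p.1 p.2) [seq (a, b) | a <- s, b <- t] =
  (\sum_(x <- s) \sum_(y <- t) P x y)%N.
Proof. by rewrite count_sum big_allpairs. Qed.

Lemma invS_inv_on f N : invS f N = inv_on f (rng N).
Proof. exact: (count_allpairs (fun x y => (x < y) && (f y < f x))). Qed.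

Lemma eq_in_inv_on f g s : {in s, f =1 g} -> inv_on f s = inv_on g s.
Proof.
move=> efg; apply: eq_big_seq => x hx; apply: eq_big_seq => y hy.
by rewrite /invpair !efg.
Qed.

Lemma perm_inv_on f s t : perm_eq s t -> inv_on f s = inv_on f t.
Proof.
by move=> st; rewrite /inv_on (perm_big _ st); apply: eq_bigr => x _; apply: perm_big.
Qed.

Lemma big_restrict_uniq (s t : seq int) (P : pred int) (F : int -> nat) :
  uniq s -> uniq t -> t =i [pred x in s | P x] ->
  {in s, forall x, ~~ P x -> F x = 0%N} ->
  (\sum_(x <- s) F x = \sum_(x <- t) F x)%N.
Proof.
move=> us ut ht hF; rewrite (bigID P) /= [X in (_ + X)%N]big1_seq ?addn0; last first.
  by move=> x /andP [Px sx]; apply: hF.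
rewrite -big_filter; apply/perm_big/uniq_perm; rewrite ?filter_uniq //.
by move=> x; rewrite mem_filter ht inE andbC.
Qed.

Lemma invpair_outr (u : sperm) M x y :
  fixed_outside u M -> (M < absz y)%N -> invpair u x y = 0%N.
Proof.
move=> hu hy; rewrite /invpair (hu _ hy); apply/eqP; rewrite eqb0.
apply/andP => -[xy yux]; have [hx|hx] := leqP (absz x) M.
  by have := fixed_outside_bounded hu hx; lia.
by move: yux; rewrite (hu _ hx); lia.
Qed.

Lemma invpair_outl (u : sperm) M x y :
  fixed_outside u M -> (M < absz y)%N -> invpair u y x = 0%N.
Proof.
move=> hu hy; rewrite /invpair (hu _ hy); apply/eqP; rewrite eqb0.
apply/andP => -[yx uxy]; have [hx|hx] := leqP (absz x) M.
  by have := fixed_outside_bounded hu hx; lia.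
by move: uxy; rewrite (hu _ hx); lia.
Qed.

Lemma inv_on_restrict (u : sperm) M s t : fixed_outside u M -> uniq s -> uniq t ->
  t =i [pred x in s | absz x <= M]%N -> inv_on u s = inv_on u t.
Proof.
move=> hu us ut st; rewrite /inv_on (big_restrict_uniq us ut st); last first.
  by move=> x _ hx; apply: big1_seq => y _; apply: invpair_outl hu _; lia.
apply: eq_bigr => x _; apply: (big_restrict_uniq us ut st).
by move=> y _ hy; apply: invpair_outr hu _; lia.
Qed.

Lemma rng_restrict M N : (M <= N)%N -> rng M =i [pred x in rng N | absz x <= M]%N.
Proof. by move=> MN x; rewrite inE !mem_rng; lia. Qed.

Lemma posr_restrict M N : (M <= N)%N -> posr M =i [pred x in posr N | absz x <= M]%N.
Proof. by move=> MN x; rewrite inE !mem_posr; lia. Qed.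

Lemma lenS_inv_on (u : sperm) N : (sbound u <= N)%N -> lenS u = inv_on u (rng N).
Proof.
move=> uN; rewrite /lenS invS_inv_on.
apply/esym/(@inv_on_restrict _ (sbound u)); rewrite ?uniq_rng //.
  exact: sperm_fixed_outside.
exact: rng_restrict.
Qed.

Lemma eq_lenS (u w : sperm) : u =1 w -> lenS u = lenS w.
Proof.
move=> uw; set N := maxn (sbound u) (sbound w).
rewrite (@lenS_inv_on u N) ?leq_maxl // (@lenS_inv_on w N) ?leq_maxr //.
by apply: eq_in_inv_on => x _.
Qed.

Definition between (u : int -> int) (a b c : int) : bool :=
  (a < c < b) && (u a < u c < u b).

Lemma inv_on_cons2 f a b s :
  inv_on f [:: a, b & s] =
  (invpair f a a + invpair f a b + invpair f b a + invpair f b b +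
   \sum_(c <- s) (invpair f a c + invpair f b c + invpair f c a + invpair f c b) +
   inv_on f s)%N.
Proof.
rewrite /inv_on; under eq_bigr => x _ do rewrite !big_cons.
by rewrite !big_cons !big_split /=; lia.
Qed.

(* The pairs {a, c} and {b, c} keep their total number of inversions, unless
   u c lies strictly between u a and u b, where both become inversions. *)
Lemma invpair_transp (u : int -> int) a b c :
  a < b -> u a < u b -> c != a -> c != b -> u c != u a -> u c != u b ->
  let v := u \o transp a b in
  (invpair v a c + invpair v b c + invpair v c a + invpair v c b =
   invpair u a c + invpair u b c + invpair u c a + invpair u c b
   + 2 * between u a b c)%N.
Proof.
move=> ab uab ca cb uca ucb /=.
rewrite /invpair /between /= transpL transpR transp_id //.
move: ca cb uca ucb; case: (ltgtP a c); case: (ltgtP b c);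
  case: (ltgtP (u a) (u c)); case: (ltgtP (u b) (u c)) => //=; lia.
Qed.

Lemma inv_on_transp (u : int -> int) s a b :
  uniq s -> a \in s -> b \in s -> a < b -> injective u -> u a < u b ->
  inv_on (u \o transp a b) s = (inv_on u s + 1 + 2 * count (between u a b) s)%N.
Proof.
move=> us sa sb ab uinj uab.
have nab : a != b by rewrite lt_eqF.
set s' := [seq x <- s | (x != a) && (x != b)].
have ss' : perm_eq s [:: a, b & s'].
  apply: uniq_perm => //=.
    by rewrite !inE !mem_filter !eqxx /= andbF orbF nab filter_uniq.
  move=> x; rewrite !inE mem_filter.
  by case: (eqVneq x a) => [->|] //=; case: (eqVneq x b) => [->|] //=; rewrite andbT.
have s'ab x : x \in s' -> (x != a) && (x != b) by rewrite mem_filter => /andP [].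
rewrite !(perm_inv_on _ ss') (permP ss') !inv_on_cons2 /=.
rewrite [inv_on _ s'](@eq_in_inv_on _ u); last first.
  by move=> x /s'ab /andP [xa xb] /=; rewrite transp_id.
rewrite (eq_big_seq (fun c => invpair u a c + invpair u b c + invpair u c a
           + invpair u c b + 2 * between u a b c))%N; last first.
  move=> c /s'ab /andP [ca cb]; apply: invpair_transp;
    by rewrite ?(inj_eq uinj).
rewrite big_split /= -big_distrr /= -count_sum.
rewrite /between !ltxx andbF /invpair /= transpL transpR !ltxx uab ab (lt_gtF ab).
by rewrite (lt_gtF uab); lia.
Qed.

Lemma lenS_transp (u w : sperm) a b N :
  (forall x, w x = u (transp a b x)) -> a < b -> a != 0 -> b != 0 -> u a < u b ->
  (maxn (maxn (sbound u) (sbound w)) (maxn (absz a) (absz b)) <= N)%N ->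
  lenS w = (lenS u + 1 + 2 * count (between u a b) (rng N))%N.
Proof.
move=> hw ab a0 b0 uab bN.
rewrite !(@lenS_inv_on _ N); [|lia|lia].
rewrite -(inv_on_transp (uniq_rng N) _ _ ab (@sfun_inj u) uab) ?mem_rng ?a0 ?b0 //; try lia.
by apply: eq_in_inv_on => x _ /=; rewrite hw.
Qed.

Section LenSTransp.

Variables (u w : sperm) (a b : int).
Hypotheses (hw : forall x, w x = u (transp a b x)) (ab : a < b) (a0 : a != 0) (b0 : b != 0).

Let N := maxn (maxn (sbound u) (sbound w)) (maxn (absz a) (absz b)).

Lemma lenS_transp_up : u a < u b -> exists k, lenS w = (lenS u + 1 + 2 * k)%N.
Proof. by move=> uab; eexists; apply: (lenS_transp (N := N)). Qed.

Lemma lenS_transp_down : u b < u a -> exists k, lenS u = (lenS w + 1 + 2 * k)%N.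
Proof.
move=> uba; have wab : w a < w b by rewrite !hw transpL transpR.
by eexists; apply: (lenS_transp (mul_transp_inv hw) (N := N)) => //; rewrite /N; lia.
Qed.

Lemma lenS_transp_gap : u a < u b -> (forall c, c != 0 -> ~~ between u a b c) ->
  lenS w = (lenS u).+1.
Proof.
move=> uab gap; rewrite (lenS_transp (N := N) hw) //.
suff -> : count (between u a b) (rng N) = 0%N by lia.
apply/eqP; rewrite -leqn0 leqNgt -has_count; apply/hasPn => c.
by rewrite mem_rng => /andP [/gap].
Qed.

End LenSTransp.

(** * A necessary condition for the 0-Bruhat order of S_{+-oo} *)

Definition le0_crit (u w : int -> int) :=
  [/\ (forall x, x < 0 -> u x <= w x), (forall x, 0 < x -> w x <= u x) &
      (forall x y, (x < y < 0) || (0 < x < y) -> u x < u y -> w x < w y)].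

Lemma le0_crit_refl (u w : int -> int) : u =1 w -> le0_crit u w.
Proof. by move=> uw; split=> [x _|x _|x y _]; rewrite ?uw. Qed.

Lemma le0_crit_trans (u v w : int -> int) : le0_crit u v -> le0_crit v w -> le0_crit u w.
Proof.
case=> uv1 uv2 uv3 [vw1 vw2 vw3]; split=> [x x0|x x0|x y xy uxy].
- exact: le_trans (uv1 x x0) (vw1 x x0).
- exact: le_trans (vw2 x x0) (uv2 x x0).
- exact: vw3 x y xy (uv3 x y xy uxy).
Qed.

Lemma coverS_ordered (u w : sperm) a b :
  coverS u w -> (forall x, w x = u (transp a b x)) -> a < 0 < b ->
  u a < u b /\ forall c, c != 0 -> a < c < b -> ~~ (u a < u c < u b).
Proof.
move=> [lw _] hw /andP [a0 b0]; have ab : a < b by lia.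
have a0' : a != 0 by lia.
have b0' : b != 0 by lia.
have [uab|uba|/(@sfun_inj u)] := ltgtP (u a) (u b); last by lia.
  have := lenS_transp hw ab a0' b0' uab (leqnn _); rewrite lw => e.
  set N := maxn _ _ in e; have /eqP : count (between u a b) (rng N) = 0%N by lia.
  rewrite -leqn0 leqNgt -has_count => /hasPn nb; split=> // c c0 abc.
  by move: (nb c); rewrite mem_rng c0 /between abc /=; apply; rewrite /N; lia.
by have [k] := lenS_transp_down hw ab a0' b0' uba; rewrite lw; lia.
Qed.

Lemma coverS_crit (u w : sperm) : coverS u w -> le0_crit u w.
Proof.
move=> cuw; have [_ [a [b [ab hw]]]] := cuw.
have [uab nb] := coverS_ordered cuw hw ab.
have wa : w a = u b by rewrite hw transpL.
have wb : w b = u a by rewrite hw transpR.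
have wx x : x != a -> x != b -> w x = u x by move=> xa xb; rewrite hw transp_id.
split=> [x x0|x x0|x y xy uxy].
- by case: (eqVneq x a) => [->|xa]; rewrite ?wa ?wx //; lia.
- by case: (eqVneq x b) => [->|xb]; rewrite ?wb ?wx //; lia.
have ne c d : c != d -> u c != u d by rewrite (inj_eq (@sfun_inj u)).
move: xy uxy; case: (eqVneq x a) => [->|xa] xy uxy.
  rewrite wa wx; [have := nb y; have := ne y b|..]; lia.
move: xy uxy; case: (eqVneq y a) => [->|ya] xy uxy; first by rewrite wa wx; lia.
move: xy uxy; case: (eqVneq x b) => [->|xb] xy uxy; first by rewrite wb wx; lia.
move: xy uxy; case: (eqVneq y b) => [->|yb] xy uxy; last by rewrite !wx.
by rewrite wb wx //; have := nb x; have := ne x a xa; lia.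
Qed.

Lemma leS0_crit u w : leS0 u w -> le0_crit u w.
Proof.
elim=> [u1 w1 /le0_crit_refl //|u1 v1 w1 _ IH cvw].
exact: le0_crit_trans IH (coverS_crit cvw).
Qed.

(** * The length of a signed permutation *)

Definition negc (f : int -> int) (s : seq int) : nat := count (fun i => f i < 0) s.

Definition negs (f : int -> int) (s : seq int) : nat :=
  (\sum_(i <- s) (if (f i < 0)%R then absz (f i) else 0))%N.

Lemma lenB_inv_on (u : sperm) N : (sbound u <= N)%N ->
  lenB u = (inv_on u (posr N) + negs u (posr N))%N.
Proof.
move=> uN; have hu := @sperm_fixed_outside u _ (leqnn (sbound u)).
have PN := posr_restrict uN.
rewrite /lenB (count_allpairs (fun x y => (x < y) && (u y < u x))).
congr addn; first by rewrite (inv_on_restrict hu (uniq_posr N) (uniq_posr _) PN).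
rewrite big_mkcond /negs (big_restrict_uniq (uniq_posr N) (uniq_posr _) PN) //.
move=> x; rewrite mem_posr => /andP [x0 _] xM; rewrite hu; last by lia.
by rewrite ltNge (ltW x0).
Qed.

Lemma eq_lenB (u w : sperm) : u =1 w -> lenB u = lenB w.
Proof.
move=> uw; set N := maxn (sbound u) (sbound w).
rewrite (@lenB_inv_on u N) ?leq_maxl // (@lenB_inv_on w N) ?leq_maxr //.
rewrite (@eq_in_inv_on u w) //; congr addn.
by apply: eq_bigr => x _; rewrite uw.
Qed.

Lemma isB_abs_inj (u : sperm) i j :
  isB u -> 0 < i -> 0 < j -> absz (u i) = absz (u j) -> i = j.
Proof.
move=> uB i0 j0 uij; have : (u i = u j) \/ (u i = u (- j)) by rewrite uB; lia.
by case=> /(@sfun_inj u); lia.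
Qed.

(* For signed u, the map i |-> |u i| permutes 1..N. *)
Lemma count_abs_lt (u : sperm) N m : isB u -> (sbound u <= N)%N -> (0 < m <= N.+1)%N ->
  count (fun j => (absz (u j) < m)%N) (posr N) = m.-1.
Proof.
move=> uB uN m0; have hu := sperm_fixed_outside uN.
have abs_perm : perm_eq (map (fun j => absz (u j)) (posr N)) (iota 1 N).
  have abs_uniq : uniq (map (fun j => absz (u j)) (posr N)).
    rewrite map_inj_in_uniq ?uniq_posr // => i j.
    by rewrite !mem_posr => /andP [i0 _] /andP [j0 _]; apply: isB_abs_inj.
  have sub : {subset map (fun j => absz (u j)) (posr N) <= iota 1 N}.
    move=> k /mapP [j]; rewrite mem_posr mem_iota => /andP [j0 jN] ->.
    by have := fixed_outside_bounded hu jN; have := sperm_eq0 u j; lia.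
  have [|_ e] := uniq_min_size abs_uniq sub; first by rewrite !size_map !size_iota.
  by apply: uniq_perm; rewrite ?iota_uniq.
rewrite -(count_map (fun j => absz (u j)) (fun k => (k < m)%N)) (permP abs_perm).
have -> : iota 1 N = iota 1 m.-1 ++ iota (1 + m.-1) (N - m.-1).
  by rewrite -iotaD; congr iota; lia.
rewrite count_cat (eq_in_count (a2 := predT)) ?count_predT ?size_iota; last first.
  by move=> k; rewrite mem_iota /=; lia.
rewrite (eq_in_count (a2 := pred0)) ?count_pred0 ?addn0 //.
by move=> k; rewrite mem_iota /=; lia.
Qed.

Lemma inv_on_cat f s t :
  inv_on f (s ++ t) = (inv_on f s + inv_on f t +
    \sum_(x <- s) \sum_(y <- t) invpair f x y +
    \sum_(x <- t) \sum_(y <- s) invpair f x y)%N.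
Proof.
rewrite /inv_on big_cat /=; under eq_bigr => x _ do rewrite big_cat.
under [X in (_ + X)%N]eq_bigr => x _ do rewrite big_cat.
by rewrite !big_split /=; lia.
Qed.

Lemma perm_rng N : perm_eq (rng N) (map -%R (posr N) ++ posr N).
Proof.
apply: uniq_perm; rewrite ?uniq_rng // ?cat_uniq ?uniq_posr ?andbT.
  rewrite map_inj_uniq ?uniq_posr /=; last exact: oppr_inj.
  apply/hasPn => x; rewrite mem_posr => /andP [x0 _].
  by apply/mapP => -[y]; rewrite mem_posr; lia.
move=> x; rewrite mem_cat mem_rng mem_posr; apply/idP/idP => [/andP [x0 xN]|].
  have [xp|xn] := ltP 0 x; first by apply/orP; right; lia.
  by apply/orP; left; apply/mapP; exists (- x); rewrite ?mem_posr; lia.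
by case/orP => [/mapP [y]|]; rewrite ?mem_posr; lia.
Qed.

(* Only the pairs (-i, j) with i, j > 0 cross zero, and such a pair is an
   inversion exactly when u i + u j < 0. *)
Lemma inv_on_rng_isB (u : sperm) N : isB u ->
  inv_on u (rng N) = (2 * inv_on u (posr N) +
    \sum_(i <- posr N) \sum_(j <- posr N) (u i + u j < 0)%R)%N.
Proof.
move=> uB; set P := posr N.
have P0 i : i \in P -> 0 < i by rewrite mem_posr => /andP [].
rewrite (perm_inv_on _ (perm_rng N)) inv_on_cat -/P.
have -> : inv_on u (map -%R P) = inv_on u P.
  rewrite /inv_on big_map exchange_big /= big_map; apply: eq_bigr => i _.
  by apply: eq_bigr => j _; rewrite /invpair !uB; congr (nat_of_bool _); apply/idP/idP; lia.
have -> : (\sum_(x <- P) \sum_(y <- map -%R P) invpair u x y = 0)%N.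
  apply: big1_seq => i /andP [_ /P0 i0]; apply: big1_seq => j /andP [_].
  by case/mapP => k /P0 k0 ->; rewrite /invpair; case: ltP => //=; lia.
rewrite big_map (eq_big_seq (fun i => \sum_(j <- P) (u i + u j < 0)%R))%N.
  by rewrite addn0 mul2n -addnn.
move=> i /P0 i0; apply: eq_big_seq => j /P0 j0.
by rewrite /invpair uB; congr (nat_of_bool _); apply/idP/idP; lia.
Qed.

Lemma neg_sum_cases (u : sperm) i j : isB u -> 0 < i -> 0 < j ->
  nat_of_bool (u i + u j < 0) =
  ((i == j) && (u i < 0)%R + (u i < 0)%R && (absz (u j) < absz (u i))
    + (u j < 0)%R && (absz (u i) < absz (u j)))%N.
Proof.
move=> uB i0 j0; have := sperm_eq0 u i; have [<-|ij] := eqVneq i j; first by lia.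
have : absz (u i) != absz (u j) by apply/eqP => /(isB_abs_inj uB i0 j0); apply/eqP.
lia.
Qed.

Lemma sum_neg_pairs (u : sperm) N : isB u -> (sbound u <= N)%N ->
  (\sum_(i <- posr N) \sum_(j <- posr N) (u i + u j < 0)%R =
   negc u (posr N) + 2 * \sum_(i <- posr N) (if (u i < 0)%R then (absz (u i)).-1 else 0))%N.
Proof.
move=> uB uN; set P := posr N.
have P0 i : i \in P -> 0 < i by rewrite mem_posr => /andP [].
have hu := sperm_fixed_outside uN.
have diag i : i \in P -> (\sum_(j <- P) ((i == j) && (u i < 0)%R) = (u i < 0)%R)%N.
  move=> iP; rewrite (bigD1_seq i) ?uniq_posr //= eqxx big1 ?addn0 //.
  by move=> j; rewrite eq_sym => /negbTE ->.
have below i : i \in P -> (\sum_(j <- P) ((u i < 0)%R && (absz (u j) < absz (u i)))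
    = if (u i < 0)%R then (absz (u i)).-1 else 0)%N.
  move=> iP; case: ifP => ui0 /=; last by rewrite big1.
  rewrite -count_sum count_abs_lt //; move: iP; rewrite mem_posr => /andP [i0 iN].
  by have := fixed_outside_bounded hu iN; have := sperm_eq0 u i; lia.
rewrite (eq_big_seq (fun i => \sum_(j <- P) ((i == j) && (u i < 0)%R) +
    \sum_(j <- P) ((u i < 0)%R && (absz (u j) < absz (u i))) +
    \sum_(j <- P) ((u j < 0)%R && (absz (u i) < absz (u j)))))%N; last first.
  move=> i /P0 i0; rewrite -!big_split; apply: eq_big_seq => j /P0 j0.
  exact: neg_sum_cases.
rewrite !big_split /= [X in (_ + X)%N]exchange_big /= /negc count_sum.
by rewrite (eq_big_seq _ diag) (eq_big_seq _ below) -addnA addnn -mul2n.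
Qed.

Lemma lenS_lenB (u : sperm) N : isB u -> (sbound u <= N)%N ->
  (lenS u + negc u (posr N) = 2 * lenB u)%N.
Proof.
move=> uB uN; rewrite (lenS_inv_on uN) (lenB_inv_on uN) inv_on_rng_isB //.
rewrite sum_neg_pairs // /negs /negc count_sum.
have -> : (\sum_(i <- posr N) (if (u i < 0)%R then absz (u i) else 0) =
    \sum_(i <- posr N) (u i < 0)%R +
    \sum_(i <- posr N) (if (u i < 0)%R then (absz (u i)).-1 else 0))%N.
  by rewrite -big_split; apply: eq_bigr => i _ /=; case: ifP => //; lia.
lia.
Qed.

Lemma big_change1 (F G : int -> nat) s p : uniq s -> p \in s ->
  {in s, forall x, x != p -> F x = G x} ->
  (\sum_(x <- s) F x + G p = \sum_(x <- s) G x + F p)%N.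
Proof.
move=> us sp FG; rewrite (bigD1_seq p sp us) (bigD1_seq p sp us) /=.
have -> : (\sum_(x <- s | x != p) F x = \sum_(x <- s | x != p) G x)%N.
  by rewrite big_seq_cond [RHS]big_seq_cond; apply: eq_bigr => x /andP [sx xp]; rewrite FG.
by rewrite addnAC [RHS]addnAC [X in (X + _)%N]addnC.
Qed.

Lemma big_change2 (F G : int -> nat) s p q : uniq s -> p \in s -> q \in s -> p != q ->
  {in s, forall x, x != p -> x != q -> F x = G x} ->
  (\sum_(x <- s) F x + G p + G q = \sum_(x <- s) G x + F p + F q)%N.
Proof.
move=> us sp sq pq FG; pose H x := if x == p then F p else G x.
have FH : {in s, forall x, x != q -> F x = H x}.
  by move=> x sx xq; rewrite /H; case: (eqVneq x p) => [->|xp] //; apply: FG.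
have HG : {in s, forall x, x != p -> H x = G x} by move=> x _ /negbTE; rewrite /H => ->.
have h1 := big_change1 us sq FH; have h2 := big_change1 us sp HG.
rewrite /H eqxx eq_sym (negbTE pq) in h1 h2.
by rewrite addnAC h1 addnAC h2.
Qed.

Section LenBChange.

Variables (u w : sperm).
Hypotheses (uB : isB u) (wB : isB w).

Lemma lenB_change1 p : 0 < p -> (forall x, 0 < x -> x != p -> w x = u x) ->
  (lenS w + (w p < 0)%R + 2 * lenB u = lenS u + (u p < 0)%R + 2 * lenB w)%N.
Proof.
move=> p0 wu; set N := maxn (maxn (sbound u) (sbound w)) (absz p).
have [uN wN] : (sbound u <= N)%N /\ (sbound w <= N)%N by rewrite /N; lia.
have Su := lenS_lenB uB uN; have Sw := lenS_lenB wB wN.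
have := @big_change1 (fun x => (w x < 0)%R : nat) (fun x => (u x < 0)%R : nat)
  (posr N) p (uniq_posr _).
rewrite -!count_sum -/(negc w _) -/(negc u _) mem_posr p0 leq_maxr => /(_ isT) nc.
suff ncp : (negc w (posr N) + (u p < 0)%R = negc u (posr N) + (w p < 0)%R)%N.
  by move: Su Sw ncp; lia.
by apply: nc => x; rewrite mem_posr => /andP [x0 _] xp; rewrite wu.
Qed.

Lemma lenB_change2 p q : 0 < p -> 0 < q -> p != q ->
  (forall x, 0 < x -> x != p -> x != q -> w x = u x) ->
  (lenS w + (w p < 0)%R + (w q < 0)%R + 2 * lenB u =
   lenS u + (u p < 0)%R + (u q < 0)%R + 2 * lenB w)%N.
Proof.
move=> p0 q0 pq wu; set N := maxn (maxn (sbound u) (sbound w)) (maxn (absz p) (absz q)).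
have [uN wN] : (sbound u <= N)%N /\ (sbound w <= N)%N by rewrite /N; lia.
have Su := lenS_lenB uB uN; have Sw := lenS_lenB wB wN.
have := @big_change2 (fun x => (w x < 0)%R : nat) (fun x => (u x < 0)%R : nat)
  (posr N) p q (uniq_posr _).
rewrite -!count_sum -/(negc w _) -/(negc u _) !mem_posr p0 q0.
have [pN qN] : (absz p <= N)%N /\ (absz q <= N)%N by rewrite /N; lia.
rewrite pN qN => /(_ isT isT pq) nc.
suff ncp : (negc w (posr N) + (u p < 0)%R + (u q < 0)%R =
    negc u (posr N) + (w p < 0)%R + (w q < 0)%R)%N.
  by move: Su Sw ncp; lia.
by apply: nc => x; rewrite mem_posr => /andP [x0 _] xp xq; rewrite wu.
Qed.

End LenBChange.

(** * Type B covers are chains of covers of S_{+-oo} *)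

Lemma leS0_eq_r (u v w : sperm) : leS0 u v -> v =1 w -> leS0 u w.
Proof.
move=> uv; elim: uv w => [u1 w1 uw1|u1 v1 w1 _ IH [lw [a [b [ab hw]]]]] w2 ww2.
  by apply: leS0_refl => x; rewrite uw1 ww2.
apply: (leS0_step (IH _ (frefl _))); split; first by rewrite -(eq_lenS ww2).
by exists a, b; split => // x; rewrite -ww2 hw.
Qed.

Lemma leS0_trans u v w : leS0 u v -> leS0 v w -> leS0 u w.
Proof.
move=> uv vw; elim: vw u uv => [v1 w1 vw1|v1 v2 w1 _ IH cvw] u uv.
  exact: leS0_eq_r uv vw1.
exact: leS0_step (IH _ uv) cvw.
Qed.

Lemma coverS_leS0 (u w : sperm) a b : a < 0 < b ->
  (forall x, w x = u (transp a b x)) -> lenS w = (lenS u).+1 -> leS0 u w.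
Proof.
move=> ab hw lw; apply: (leS0_step (v := u)); first exact: leS0_refl.
by split => //; exists a, b.
Qed.

Lemma coverB_diag_leS0 (u w : sperm) j : isB u -> isB w -> lenB w = (lenB u).+1 ->
  0 < j -> (forall x, w x = u (transp (- j) j x)) -> leS0 u w.
Proof.
move=> uB wB lw j0 hw.
have wu x : 0 < x -> x != j -> w x = u x by move=> x0 xj; rewrite hw transp_id //; lia.
have lB := lenB_change1 uB wB j0 wu; rewrite hw transpR uB lw in lB.
have uj0 := sperm_eq0 u j; have j0' : j != 0 by lia.
have jj : - j < j by lia.
have mj0 : - j != 0 by lia.
have [uj|uj|/(@sfun_inj u)] := ltgtP (u (- j)) (u j); last by lia.
  have [k lwk] := lenS_transp_up hw jj mj0 j0' uj.
  by rewrite uB in uj; apply: (coverS_leS0 (a := - j) (b := j) _ hw); lia.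
by have [k luk] := lenS_transp_down hw jj mj0 j0' uj; rewrite uB in uj; lia.
Qed.

Lemma coverB_pair_leS0 (u w : sperm) i j : isB u -> isB w -> lenB w = (lenB u).+1 ->
  0 < i < j -> (forall x, w x = u (transp (- j) i (transp (- i) j x))) -> leS0 u w.
Proof.
move=> uB wB lw ij hw; have [wi wj wu] := mul_pair_transpE uB ij hw.
have i0 : 0 < i by lia.
have j0 : 0 < j by lia.
have nij : i != j by lia.
have i0' : i != 0 by lia.
have j0' : j != 0 by lia.
have mi0 : - i != 0 by lia.
have mj0 : - j != 0 by lia.
have mji : - j < i by lia.
have mij : - i < j by lia.
have [v hv] := sperm_transp u mj0 i0'.
have hwv x : w x = v (transp (- i) j x) by rewrite hw hv.
have wu_pos x : 0 < x -> x != i -> x != j -> w x = u x by move=> *; apply: wu; lia.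
have lB := lenB_change2 uB wB i0 j0 nij wu_pos; rewrite wi wj lw in lB.
have vmi : v (- i) = - u i by rewrite hv transp_id ?uB //; lia.
have vj : v j = u j by rewrite hv transp_id //; lia.
have ui0 := sperm_eq0 u i; have uj0 := sperm_eq0 u j.
have [uji|uji|/(@sfun_inj u)] := ltgtP (u (- j)) (u i); last by lia.
  have [k1 lv] := lenS_transp_up hv mji mj0 i0' uji.
  have vij : v (- i) < v j by rewrite vmi vj; move: uji; rewrite uB; lia.
  have [k2 lwv] := lenS_transp_up hwv mij mi0 j0' vij.
  rewrite uB in uji; apply: (@leS0_trans u v).
    by apply: (coverS_leS0 (a := - j) (b := i) _ hv); lia.
  by apply: (coverS_leS0 (a := - i) (b := j) _ hwv); lia.
have [k1 lv] := lenS_transp_down hv mji mj0 i0' uji.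
have vij : v j < v (- i) by rewrite vmi vj; move: uji; rewrite uB; lia.
have [k2 lwv] := lenS_transp_down hwv mij mi0 j0' vij.
by rewrite uB in uji; lia.
Qed.

Lemma leB0_leS0 u w : leB0 u w -> leS0 u w.
Proof.
elim=> [u1 w1 /leS0_refl //|u1 v1 w1 _ IH [uB wB lw [[j [j0 hw]]|[i [j [ij hw]]]]]].
  exact: leS0_trans IH (coverB_diag_leS0 uB wB lw j0 hw).
exact: leS0_trans IH (coverB_pair_leS0 uB wB lw ij hw).
Qed.

Lemma coverB_diag_of_gap (u : sperm) b : isB u -> 0 < b -> u (- b) < u b ->
  (forall c, c != 0 -> ~~ between u (- b) b c) ->
  exists2 v : sperm, coverB u v & forall x, v x = u (transp (- b) b x).
Proof.
move=> uB b0 ub gap; have b0' : b != 0 by lia.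
have mb0 : - b != 0 by lia.
have [v hv] := sperm_transp u mb0 b0'.
have vB : isB v by apply: (isB_comp uB _ hv) => y; rewrite /transp; repeat case: eqP; lia.
exists v => //; split => //; last by left; exists b.
have vu x : 0 < x -> x != b -> v x = u x by move=> x0 xb; rewrite hv transp_id //; lia.
have := lenB_change1 uB vB b0 vu; rewrite (lenS_transp_gap hv) //; last by lia.
by rewrite hv transpR uB in ub *; lia.
Qed.

Lemma coverB_pair_of_gap (u : sperm) i j : isB u -> 0 < i < j -> - u j < u i ->
  (u i < 0) != (u j < 0) ->
  (forall c, 0 < c < i -> ~~ (- u j < u c < u i)) ->
  (forall c, 0 < c < j -> ~~ (- u i < u c < u j)) ->
  exists v : sperm, [/\ coverB u v, v i = - u j, v j = - u i &
    forall x, x != i -> x != - i -> x != j -> x != - j -> v x = u x].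
Proof.
move=> uB ij uij sgn gi gj.
have i0 : 0 < i by lia.
have j0 : 0 < j by lia.
have nij : i != j by lia.
have i0' : i != 0 by lia.
have j0' : j != 0 by lia.
have mi0 : - i != 0 by lia.
have mj0 : - j != 0 by lia.
have [v hv] := sperm_transp u mj0 i0'.
have [w hw] := sperm_transp v mi0 j0'.
have hwu x : w x = u (transp (- j) i (transp (- i) j x)) by rewrite hw hv.
have [wi wj wu] := mul_pair_transpE uB ij hwu.
have wB : isB w.
  by apply: (isB_comp uB _ hwu) => y; rewrite /transp; repeat case: eqP; lia.
exists w; split => //; split => //; last by right; exists i, j.
have vmi : v (- i) = - u i by rewrite hv transp_id ?uB //; lia.
have vj : v j = u j by rewrite hv transp_id //; lia.
have lv : lenS v = (lenS u).+1.
  apply: (lenS_transp_gap hv) => //; rewrite ?uB //; try lia.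
  move=> c c0; rewrite /between uB; apply/negP => /andP [cji ujci].
  have [c_pos|c_neg] := ltP 0 c; first by have := gi c; lia.
  by have := gj (- c); rewrite uB; lia.
have lw : lenS w = (lenS v).+1.
  apply: (lenS_transp_gap hw) => //; rewrite ?vmi ?vj //; try lia.
  move=> c c0; rewrite /between vmi vj; apply/negP => /andP [cij vci].
  have [eci|ci] := eqVneq c i; first by move: vci; rewrite eci hv transpR uB; lia.
  move: vci; rewrite hv transp_id //; last by lia.
  have [c_pos|c_neg] := ltP 0 c; first by have := gj c; lia.
  by have := gi (- c); rewrite uB; lia.
have wu_pos x : 0 < x -> x != i -> x != j -> w x = u x by move=> *; apply: wu; lia.
by have := lenB_change2 uB wB i0 j0 nij wu_pos; rewrite wi wj lw lv; lia.
Qed.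

(** * Descent towards w *)

Definition le0_crit_pos (u w : int -> int) :=
  (forall c, 0 < c -> w c <= u c) /\
  (forall c d, 0 < c -> c < d -> u c < u d -> w c < w d).

Definition dist_pos (u w : int -> int) (N : nat) : nat :=
  (\sum_(c <- posr N) absz (u c - w c))%N.

Lemma dist_pos_lt (u v w : int -> int) N p :
  (forall c, 0 < c -> (absz (v c - w c) <= absz (u c - w c))%N) ->
  0 < p -> (absz p <= N)%N -> (absz (v p - w p) < absz (u p - w p))%N ->
  (dist_pos v w N < dist_pos u w N)%N.
Proof.
move=> vu p0 pN vup; have pP : p \in posr N by rewrite mem_posr p0.
rewrite /dist_pos !(bigD1_seq p pP (uniq_posr N)) /= -addSn leq_add //.
rewrite big_seq_cond [X in (_ <= X)%N]big_seq_cond; apply: leq_sum => c.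
by rewrite mem_posr => /andP [/andP [c0 _] _]; apply: vu.
Qed.

Lemma isB_abs_preimage (u : sperm) y : isB u -> y != 0 ->
  exists2 d, 0 < d & absz (u d) = absz y.
Proof.
move=> uB y0; have [d ud] := sperm_surj u y.
have d0 : d != 0 by apply: contraNneq y0 => d0; rewrite -ud d0 sfun0.
have [d_pos|d_neg] := ltP 0 d; first by exists d; rewrite ?ud.
by exists (- d); rewrite ?uB ?ud; lia.
Qed.

Lemma seq_argmin (s : seq int) (f : int -> int) : s != [::] ->
  exists2 b, b \in s & forall c, c \in s -> f b <= f c.
Proof.
elim: s => [//|x [|y s] IH _]; first by exists x => [|c]; rewrite ?inE // => /eqP ->.
have [b bs bmin] := IH isT; have [fxb|fbx] := leP (f x) (f b).
  exists x => [|c]; rewrite inE ?eqxx // => /orP [/eqP -> //|cs].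
  exact: le_trans fxb (bmin c cs).
exists b => [|c]; first by rewrite inE bs orbT.
by rewrite inE => /orP [/eqP ->|/bmin //]; apply: ltW.
Qed.

Section Descent.

Variables (u w : sperm) (N : nat) (b : int).
Hypotheses (uB : isB u) (wB : isB w) (uN : fixed_outside u N) (wN : fixed_outside w N).
Hypothesis crit : le0_crit_pos u w.
Hypotheses (b0 : 0 < b) (wub : w b < u b).
Hypothesis ub_min : forall c, 0 < c -> w c < u c -> u b <= u c.

Definition descends_to (v : sperm) :=
  [/\ coverB u v, fixed_outside v N, le0_crit_pos v w & (dist_pos v w N < dist_pos u w N)%N].

Lemma fixed_below c : 0 < c -> u c < u b -> w c = u c.
Proof.
move=> c0 ucb; have := crit.1 c c0; rewrite le_eqVlt => /orP [/eqP //|wuc].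
by have := ub_min c0 wuc; lia.
Qed.

Lemma bN : (absz b <= N)%N.
Proof. by apply: (moved_bounded uN wN); rewrite lt_eqF. Qed.

Lemma alpha_descent : 0 < u b -> exists v, descends_to v.
Proof.
move=> ub0; have [crit1 crit2] := crit.
have wb_le : w b <= - u b.
  rewrite leNgt; apply/negP => wb_gt.
  have wb0 : w b != 0 by rewrite sperm_eq0; lia.
  have [d d0 ud] := isB_abs_preimage uB wb0.
  have wd : w d = u d by apply: fixed_below; lia.
  have db : d = b by apply: (isB_abs_inj wB d0 b0); rewrite wd ud.
  by move: wd ud; rewrite db; lia.
have gap c : c != 0 -> ~~ between u (- b) b c.
  move=> c0; rewrite /between uB; apply/negP => /andP [bcb ucb].
  have [c_pos|c_neg] := ltP 0 c.
    by have := @fixed_below c c_pos; have := crit2 c b; lia.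
  have mc0 : 0 < - c by lia.
  by have := @fixed_below (- c) mc0; have := crit2 (- c) b; rewrite uB; lia.
have ubb : u (- b) < u b by rewrite uB; lia.
have [v cuv hv] := coverB_diag_of_gap uB b0 ubb gap.
have vb : v b = - u b by rewrite hv transpR uB.
have vu c : 0 < c -> c != b -> v c = u c by move=> c0 cb; rewrite hv transp_id //; lia.
exists v; split => //.
- have mbN : (absz (- b) <= N)%N by rewrite abszN bN.
  move=> x xN; rewrite hv.
  exact: (fixed_outside_comp uN (transp_fixed_outside mbN bN)) xN.
- split=> [c c0|c d c0 cd].
    by case: (eqVneq c b) => [->|cb]; rewrite ?vb // vu //; apply: crit1.
  case: (eqVneq c b) => [ecb|cb].
    rewrite ecb vb vu; [|lia|lia] => ubd.
    have [ub_d|ud_b|/(@sfun_inj u) ebd] := ltgtP (u b) (u d); last by lia.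
      by apply: crit2 => //; lia.
    by have := @fixed_below d; lia.
  case: (eqVneq d b) => [edb|db]; first by rewrite edb vb vu // => ucb; apply: crit2; lia.
  by rewrite !vu //; [apply: crit2 | lia].
- apply: (dist_pos_lt _ b0 bN); last by rewrite vb; lia.
  by move=> c c0; case: (eqVneq c b) => [->|cb]; rewrite ?vb ?vu //; lia.
Qed.

Section Beta.

Variable e : int.
Hypotheses (ub0 : u b < 0) (e0 : 0 < e) (ube : - u b < u e) (wue : w e < u e).
Hypothesis ue_min : forall d, 0 < d -> - u b < u d -> w d < u d -> u e <= u d.

Lemma fixed_between d : 0 < d -> - u b < u d -> u d < u e -> w d = u d.
Proof.
move=> d0 ubd ude; have := crit.1 d d0; rewrite le_eqVlt => /orP [/eqP //|wud].
by have := ue_min d0 ubd wud; lia.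
Qed.

Lemma eN : (absz e <= N)%N.
Proof. by apply: (moved_bounded uN wN); rewrite lt_eqF. Qed.

Lemma beta_we : w e <= - u b.
Proof.
rewrite leNgt; apply/negP => we_gt; have we0 : w e != 0 by rewrite sperm_eq0; lia.
have [d d0 ud] := isB_abs_preimage uB we0.
have [ud_pos|ud_neg] := ltP 0 (u d).
  have wd : w d = u d by apply: fixed_between; lia.
  have de : d = e by apply: (@sfun_inj w); lia.
  by move: wd; rewrite de; lia.
have wd : w d = u d by apply: fixed_below; lia.
have de : d = e by apply: (isB_abs_inj wB d0 e0); rewrite wd ud.
by move: ud_neg; rewrite de; lia.
Qed.

Lemma beta_wb : w b <= - u e.
Proof.
rewrite leNgt; apply/negP => wb_gt; have wb0 : w b != 0 by rewrite sperm_eq0; lia.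
have [d d0 ud] := isB_abs_preimage uB wb0.
have [ud_pos|ud_neg] := ltP 0 (u d).
  have wd : w d = u d by apply: fixed_between; lia.
  have db : d = b by apply: (isB_abs_inj wB d0 b0); rewrite wd ud.
  by move: ud_pos; rewrite db; lia.
have wd : w d = u d by apply: fixed_below; lia.
have db : d = b by apply: (@sfun_inj w); lia.
by move: wd; rewrite db; lia.
Qed.

Lemma beta_gap_b c : 0 < c < b -> ~~ (- u e < u c < u b).
Proof.
move=> /andP [c0 cb]; apply/negP => /andP [euc ucb].
by have := fixed_below c0 ucb; have := crit.2 c b c0 cb ucb; have := beta_wb; lia.
Qed.

Lemma beta_gap_e c : 0 < c < e -> ~~ (- u b < u c < u e).
Proof.
move=> /andP [c0 ce]; apply/negP => /andP [buc uce].
by have := fixed_between c0 buc uce; have := crit.2 c e c0 ce uce; have := beta_we; lia.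
Qed.

Section Swap.

Variable v : sperm.
Hypotheses (vb : v b = - u e) (ve : v e = - u b).
Hypothesis vu : forall c, 0 < c -> c != b -> c != e -> v c = u c.

Lemma beta_crit : le0_crit_pos v w.
Proof.
have [crit1 crit2] := crit.
split=> [c c0|c d c0 cd].
  case: (eqVneq c b) => [->|cb]; first by rewrite vb beta_wb.
  case: (eqVneq c e) => [->|ce]; first by rewrite ve beta_we.
  by rewrite vu //; apply: crit1.
have d0 : 0 < d by lia.
have [ecb|cb] := eqVneq c b.
  move: cd; rewrite ecb vb; case: (eqVneq d e) => [->|de] bd.
    by move=> _; apply: crit2; lia.
  rewrite vu //; last by lia.
  move=> eud; have [ubd|udb|/(@sfun_inj u)] := ltgtP (u b) (u d); last by lia.
    exact: crit2.
  by have := fixed_below d0 udb; have := beta_wb; lia.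
have [ece|ce] := eqVneq c e.
  move: cd; rewrite ece ve; case: (eqVneq d b) => [->|db] ed; first by rewrite vb; lia.
  rewrite vu //; last by lia.
  move=> bud; have [ued|ude|/(@sfun_inj u)] := ltgtP (u e) (u d); last by lia.
    exact: crit2.
  by have := fixed_between d0 bud ude; have := beta_we; lia.
rewrite vu //; move: cd; case: (eqVneq d b) => [->|db] cd.
  by rewrite vb => ucb; apply: crit2; lia.
move: cd; case: (eqVneq d e) => [->|de] cd; first by rewrite ve => uce; apply: crit2; lia.
by rewrite vu //; apply: crit2.
Qed.

Lemma beta_dist : (dist_pos v w N < dist_pos u w N)%N.
Proof.
apply: (dist_pos_lt _ b0 bN); last by rewrite vb; have := beta_wb; lia.
move=> c c0; case: (eqVneq c b) => [->|cb]; first by rewrite vb; have := beta_wb; lia.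
case: (eqVneq c e) => [->|ce]; first by rewrite ve; have := beta_we; lia.
by rewrite vu.
Qed.

End Swap.

Lemma beta_swap : exists v : sperm, [/\ coverB u v, v b = - u e, v e = - u b &
  forall x, x != b -> x != - b -> x != e -> x != - e -> v x = u x].
Proof.
have ue0 : 0 < u e by lia.
have sgn : (u b < 0) != (u e < 0) by rewrite ub0 ltNge (ltW ue0).
have [be|eb|ebe] := ltgtP b e; last by move: ube ub0; rewrite ebe; lia.
  apply: coverB_pair_of_gap; rewrite ?b0 ?be //; last 2 first.
  - exact: beta_gap_b.
  - exact: beta_gap_e.
  by lia.
have [v [cuv ve vb vu]] : exists v : sperm, [/\ coverB u v, v e = - u b, v b = - u e &
    forall x, x != e -> x != - e -> x != b -> x != - b -> v x = u x].
  apply: coverB_pair_of_gap; rewrite ?e0 ?eb // 1?eq_sym //.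
  - exact: beta_gap_e.
  - exact: beta_gap_b.
by exists v; split => // x xb xmb xe xme; apply: vu.
Qed.

Lemma beta_descent : exists v, descends_to v.
Proof.
have [v [cuv vb ve vu]] := beta_swap.
have vu_pos c : 0 < c -> c != b -> c != e -> v c = u c by move=> c0 cb ce; apply: vu; lia.
exists v; split => //; last exact: beta_dist; last exact: beta_crit.
move=> x xN; have hbN := bN; have heN := eN.
by rewrite vu; [exact: uN | lia..].
Qed.

End Beta.

Lemma beta_partner : u b < 0 -> exists e, [/\ 0 < e, - u b < u e, w e < u e &
  forall d, 0 < d -> - u b < u d -> w d < u d -> u e <= u d].
Proof.
move=> ub0; set P := [pred e | (- u b < u e) && (w e < u e)].
have mem_moved x : w x < u x -> (x \in posr N) = (0 < x).
  by move=> wux; rewrite mem_posr (moved_bounded uN wN) ?andbT // lt_eqF.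
have : has P (posr N).
  have wb0 : w b != 0 by rewrite sperm_eq0; lia.
  have [d d0 ud] := isB_abs_preimage uB wb0.
  have [ud_pos|ud_neg] := ltP 0 (u d).
    have [wud|wd] : w d < u d \/ w d = u d by have := crit.1 d d0; lia.
      by apply/hasP; exists d; rewrite ?mem_moved // inE wud andbT; lia.
    have db : d = b by apply: (isB_abs_inj wB d0 b0); rewrite wd ud.
    by move: ud_pos; rewrite db; lia.
  have wd : w d = u d by apply: fixed_below; lia.
  have db : d = b by apply: (@sfun_inj w); lia.
  by move: wd; rewrite db; lia.
rewrite has_filter => /(seq_argmin u) [e]; rewrite mem_filter mem_posr.
move=> /andP [/andP [ube wue] /andP [e0 _]] emin.
exists e; split => // d d0 ubd wud; apply: emin.
by rewrite mem_filter inE ubd wud mem_moved.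
Qed.

Lemma exists_descent : exists v, descends_to v.
Proof.
have [ub_pos|ub_neg] := ltP 0 (u b); first exact: alpha_descent.
have ub0 : u b < 0 by have := sperm_eq0 u b; lia.
have [e [e0 ube wue emin]] := beta_partner ub0.
exact: (beta_descent ub0 e0 ube wue emin).
Qed.

End Descent.

Lemma coverB_eq_r (u v w : sperm) : coverB u v -> v =1 w -> coverB u w.
Proof.
case=> uB vB lv cuv vw; split => //; first by move=> x; rewrite -!vw vB.
  by rewrite -(eq_lenB vw).
case: cuv => [[j [j0 hv]]|[i [j [ij hv]]]]; [left; exists j | right; exists i, j];
  by split => // x; rewrite -vw hv.
Qed.

Lemma leB0_cons (u v w : sperm) : coverB u v -> leB0 v w -> leB0 u w.
Proof.
move=> cuv vw; elim: vw u cuv => [v1 w1 vw1|v1 v2 w1 _ IH cvw] u cuv.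
  exact: leB0_step (leB0_refl (frefl u)) (coverB_eq_r cuv vw1).
exact: leB0_step (IH _ cuv) cvw.
Qed.

Lemma eq_or_mover (u w : sperm) N : isB u -> isB w ->
  fixed_outside u N -> fixed_outside w N -> le0_crit_pos u w ->
  u =1 w \/ exists b, [/\ 0 < b, w b < u b & forall c, 0 < c -> w c < u c -> u b <= u c].
Proof.
move=> uB wB uN wN [crit1 _].
have [|none] := boolP (has (fun c => w c < u c) (posr N)).
  rewrite has_filter => /(seq_argmin u) [b]; rewrite mem_filter mem_posr.
  move=> /andP [wub /andP [b0 _]] bmin; right; exists b; split => // c c0 wuc.
  by apply: bmin; rewrite mem_filter mem_posr wuc c0 (moved_bounded uN wN) // lt_eqF.
left; have pos x : 0 < x -> u x = w x.
  move=> x0; have [xN|xN] := leqP (absz x) N; last by rewrite uN // wN.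
  by move/hasPn: none => /(_ x); rewrite mem_posr x0 xN => /(_ isT); have := crit1 x x0; lia.
move=> x; have [x0|x0|<-] := ltgtP 0 x; [exact: pos | | by rewrite !sfun0].
by rewrite -(opprK x) uB wB pos //; lia.
Qed.

Lemma leB0_of_crit (u w : sperm) N : isB u -> isB w ->
  fixed_outside u N -> fixed_outside w N -> le0_crit_pos u w -> leB0 u w.
Proof.
move=> uB wB uN wN; move: {2}(dist_pos u w N).+1 (ltnSn (dist_pos u w N)) => n.
elim: n u uB uN => [//|n IH] u uB uN lt_n crit.
have [uw|[b [b0 wub bmin]]] := eq_or_mover uB wB uN wN crit; first exact: leB0_refl.
have [v [cuv vN vcrit lt_uv]] := exists_descent uB wB uN wN crit b0 wub bmin.
have [_ vB _ _] := cuv.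
by apply: leB0_cons cuv (IH v vB vN _ vcrit); lia.
Qed.

Unset Implicit Arguments.

Theorem theorem2p2 (u w : sperm) :
  isB u -> isB w -> (leB0 u w <-> leS0 u w).
Proof.
move=> uB wB; split; first exact: leB0_leS0.
move=> /leS0_crit [_ crit_pos crit_mono].
apply: (@leB0_of_crit _ _ (maxn (sbound u) (sbound w))) => //.
- exact/sperm_fixed_outside/leq_maxl.
- exact/sperm_fixed_outside/leq_maxr.
by split => // c d c0 cd; apply: crit_mono; rewrite c0 cd orbT.
Qed.
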